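(* (a) Every countably tight $L$-selective space is Fr\'echet. (b) Every countable subspace of an $L$-selective space is Fr\'echet. (c) Every strongly $L$-selective space is Fr\'echet.
   Context: All spaces are assumed $T_1$. For spaces $Y$, $X$, a map $\varphi:Y\to\mathcal P(X)\setminus\{\emptyset\}$ is lower semicontinuous (l.s.c.) if $\{y:\varphi(y)\cap U\neq\emptyset\}$ is open in $Y$ for every open $U\subseteq X$; a selection is a map $f:Y\to X$ with $f(y)\in\varphi(y)$ for all $y$. $X$ is strongly $Y$-selective if every l.s.c. map $Y\to\mathcal P(X)\setminus\{\emptyset\}$ has a continuous selection, and $Y$-selective if every l.s.c. map from $Y$ to the nonempty closed subsets of $X$ has a continuous selection. (Strongly) $L$-selective means (strongly) $(\omega+1)$-selective, with $\omega+1$ carrying the order topology. A space is Fr\'echet if whenever $x\in\overline A$ there is a sequence in $A$ converging to $x$; countably tight if whenever $x\in\overline A$ there is a countable $B\subseteq A$ with $x\in\overline B$. *)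

From HB Require Import structures.
From mathcomp Require Import all_boot all_order all_algebra.
From mathcomp Require Import all_classical topology subtype_topology.

Set Implicit Arguments.
Unset Strict Implicit.
Unset Printing Implicit Defensive.

Import Order.TTheory.
Local Open Scope classical_set_scope.

(** * The ordinal omega+1 = {0 < 1 < 2 < ... < omega}.
    Points are [Some n] (the finite ordinal n) and [None] (omega).
    We order it by transporting the lexicographic order of [bool *l nat]
    along [omega1_enc] (Some n |-> (false, n), None |-> (true, 0)),
    so that Some m < Some n iff m < n, and Some n < None for all n. *)
Definition omega1_base : Type := option nat.

Definition omega1_enc (o : omega1_base) : (bool *l nat)%type :=
  if o is Some n then (false, n) else (true, 0%N).
Definition omega1_dec (p : (bool *l nat)%type) : omega1_base :=
  if p.1 then None else Some p.2.
Lemma omega1_encK : cancel omega1_enc omega1_dec.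
Proof. by case. Qed.

HB.instance Definition _ :=
  Order.POrder.copy omega1_base
    (@can_type omega1_base _ _ _ omega1_encK : porderType (Order.Disp tt tt)).
HB.instance Definition _ :=
  Order.MonoTotal.Build (Order.Disp tt tt) omega1_base
    (f := omega1_enc) (fun _ _ => erefl).

Definition omega1 : Type := order_topology omega1_base.
HB.instance Definition _ := Topological.on omega1.

Definition lsc {Y X : topologicalType} (phi : Y -> set X) : Prop :=
  forall U : set X, open U -> open [set y | phi y `&` U !=set0].

Definition strongly_selective (Y X : topologicalType) : Prop :=
  forall phi : Y -> set X,
    (forall y, phi y !=set0) -> lsc phi ->
    exists f : Y -> X, continuous f /\ (forall y, phi y (f y)).

Definition selective (Y X : topologicalType) : Prop :=
  forall phi : Y -> set X,
    (forall y, phi y !=set0) -> (forall y, closed (phi y)) -> lsc phi ->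
    exists f : Y -> X, continuous f /\ (forall y, phi y (f y)).

Definition L_selective (X : topologicalType) : Prop := selective omega1 X.
Definition strongly_L_selective (X : topologicalType) : Prop :=
  strongly_selective omega1 X.

Definition frechet (X : topologicalType) : Prop :=
  forall (A : set X) (x : X), closure A x ->
    exists u : nat -> X, (forall n, A (u n)) /\ u @ \oo --> x.

Definition countably_tight (X : topologicalType) : Prop :=
  forall (A : set X) (x : X), closure A x ->
    exists B : set X, B `<=` A /\ countable B /\ closure B x.

(* If x lies in the closure of A, the set-valued map on omega+1 sending n to A
   and omega to {x} is lower semicontinuous, and a continuous selection f of it
   yields the sequence f(n) in A converging to f(omega) = x.  For mere
   L-selectivity the values must be closed: when A = {b_k} is countable, send n
   to the finite, hence closed in a T1 space, set {b_0, ..., b_n} instead.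
   Countable tightness reduces (a) to this case, and for (b) a sequence in a
   subspace converges as soon as its image does. *)

From HB Require Import structures.
From mathcomp Require Import all_boot all_order all_algebra.
From mathcomp Require Import all_classical topology subtype_topology.
Set Implicit Arguments.
Unset Strict Implicit.
Unset Printing Implicit Defensive.
Import Order.TTheory.
Local Open Scope classical_set_scope.

Lemma omega1_ltE m n : (Some m < Some n :> omega1)%O = (m < n)%N.
Proof. by []. Qed.

Lemma nbhs_omega1_top (W : set omega1) :
  nbhs (None : omega1) W -> \forall n \near \oo, W (Some n).
Proof.
rewrite order_nbhs_itv => -[[l r] [+ + iW]].
case: l iW => [[] [a|]|[]]; case: r => [[] [b|]|[]] //=; rewrite ?in_itv //= => iW _ _.
- by exists a.+1 => // n /= an; apply: iW; rewrite /= in_itv /= andbT.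
- by exists 0%N => // n _; apply: iW.
Qed.

Lemma continuous_omega1_cvg (X : topologicalType) (f : omega1 -> X) :
  {for None, continuous f} -> f \o Some @ \oo --> f None.
Proof. by move=> cf W /cf /nbhs_omega1_top. Qed.

Lemma open_omega1_Some n : open [set Some n : omega1].
Proof.
rewrite openE => _ ->; rewrite /interior order_nbhs_itv; case: n => [|n].
- exists `]-oo, Some 1%N : omega1[%O; first by rewrite in_itv.
  by move=> [[|m]|] //=; rewrite in_itv.
- exists `]Some n : omega1, Some n.+2 : omega1[%O.
    by rewrite in_itv /= !omega1_ltE !ltnSn.
  move=> [m|] //=; rewrite in_itv /= !omega1_ltE ltnS => /andP[nm mn].
  by apply/f_equal/eqP; rewrite eqn_leq mn.
Qed.

Lemma subspace_cvg (X : topologicalType) (A : set X)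
    (F : set_system (set_type A)) (y : set_type A) :
  Filter F -> set_val @ F --> set_val y -> F --> y.
Proof.
move=> FF Fy V; rewrite nbhsE => -[_ [[W oW <-] Wy] WV].
by apply: filterS WV _; apply: Fy; exact: open_nbhs_nbhs.
Qed.

Definition omega1_setmap {X : Type} (P : nat -> set X) (x : X) :
    omega1 -> set X :=
  fun o => if o is Some n then P n else [set x].

Section selections.
Context {X : topologicalType}.
Implicit Types (P : nat -> set X) (x : X).

Definition lower_limit P : set X :=
  [set x | forall U, open U -> U x -> \forall n \near \oo, P n `&` U !=set0].

Lemma lower_limit_cst (A : set X) x : closure A x -> lower_limit (fun=> A) x.
Proof.
move=> clA U oU Ux; apply: nearW => n.
by apply: clA; exact: open_nbhs_nbhs.
Qed.

Lemma lower_limit_initial_segments (b : nat -> X) x :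
  closure (range b) x -> lower_limit (fun n => b @` `I_n.+1) x.
Proof.
move=> clb U oU Ux; have [_ [[k _ <-] Ubk]] := clb U (open_nbhs_nbhs (conj oU Ux)).
by exists k => // n /= kn; exists (b k); split => //; exists k => //=; rewrite ltnS.
Qed.

Lemma omega1_setmap_neq0 P x :
  (forall n, P n !=set0) -> forall o, omega1_setmap P x o !=set0.
Proof. by move=> P0 [n|]; [exact: P0 | exists x]. Qed.

Lemma closed_omega1_setmap P x : accessible_space X ->
  (forall n, closed (P n)) -> forall o, closed (omega1_setmap P x o).
Proof. by move=> T1 Pcl [n|]; [exact: Pcl | exact: accessible_closed_set1]. Qed.

Lemma lsc_omega1_setmap P x : lower_limit P x -> lsc (omega1_setmap P x).
Proof.
move=> Px U oU; rewrite openE => -[n|] /= meetU.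
- apply: (@filterS _ _ _ [set Some n : omega1]); first by move=> _ ->.
  exact: open_nbhs_nbhs (conj (open_omega1_Some n) erefl).
- have Ux : U x by case: meetU => _ [->].
  have [k _ kP] := Px U oU Ux.
  apply: (@filterS _ _ _ `]Some k : omega1, +oo[); last first.
    by apply: open_nbhs_nbhs; split; [exact: rray_open | rewrite /= in_itv].
  by move=> [m|] //=; rewrite in_itv /= andbT => /ltnW/kP.
Qed.

Lemma omega1_selection_cvg P x (f : omega1 -> X) :
  {for None, continuous f} -> (forall o, omega1_setmap P x o (f o)) ->
  exists u : nat -> X, (forall n, P n (u n)) /\ u @ \oo --> x.
Proof.
move=> cf fP; exists (f \o Some); split => [n|]; first exact: (fP (Some n)).
have <- : f None = x := fP None.
exact: continuous_omega1_cvg.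
Qed.

Lemma strongly_L_selective_cvg P x :
  strongly_L_selective X -> (forall n, P n !=set0) -> lower_limit P x ->
  exists u : nat -> X, (forall n, P n (u n)) /\ u @ \oo --> x.
Proof.
move=> sX P0 Px.
have [f [cf fP]] := sX _ (omega1_setmap_neq0 x P0) (lsc_omega1_setmap Px).
exact: omega1_selection_cvg (cf None) fP.
Qed.

Lemma L_selective_cvg P x : accessible_space X -> L_selective X ->
  (forall n, P n !=set0) -> (forall n, closed (P n)) -> lower_limit P x ->
  exists u : nat -> X, (forall n, P n (u n)) /\ u @ \oo --> x.
Proof.
move=> T1 sX P0 Pcl Px.
have [f [cf fP]] := sX _ (omega1_setmap_neq0 x P0)
  (closed_omega1_setmap T1 Pcl) (lsc_omega1_setmap Px).
exact: omega1_selection_cvg (cf None) fP.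
Qed.

Lemma L_selective_countable_closure_cvg (B : set X) x :
  accessible_space X -> L_selective X -> countable B -> closure B x ->
  exists u : nat -> X, (forall n, B (u n)) /\ u @ \oo --> x.
Proof.
move=> T1 sX /pfcard_geP[B0|/surjfunPex[b Bb]] clB.
  by have [y [+ _]] := clB setT filterT; rewrite B0.
pose P n := b @` `I_n.+1.
have PB n : P n `<=` B by move=> _ [k _ <-]; rewrite Bb; exists k.
have P0 n : P n !=set0 by exists (b 0%N), 0%N.
have Pcl n : closed (P n).
  exact: accessible_finite_set_closed.1 T1 _ (finite_image _ (finite_II _)).
have Px : lower_limit P x by apply: lower_limit_initial_segments; rewrite -Bb.
have [u [Pu ux]] := L_selective_cvg T1 sX P0 Pcl Px.
by exists u; split => // n; exact/PB/Pu.
Qed.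

Lemma strongly_L_selective_frechet : strongly_L_selective X -> frechet X.
Proof.
move=> sX A x clA; have [y [Ay _]] := clA setT filterT.
have A0 : A !=set0 by exists y.
exact: strongly_L_selective_cvg sX (fun=> A0) (lower_limit_cst clA).
Qed.

Lemma countably_tight_L_selective_frechet : accessible_space X ->
  countably_tight X -> L_selective X -> frechet X.
Proof.
move=> T1 ctX sX A x /ctX[B [BA [cB clB]]].
have [u [Bu ux]] := L_selective_countable_closure_cvg T1 sX cB clB.
by exists u; split => // n; exact/BA/Bu.
Qed.

Lemma L_selective_countable_subspace_frechet (A : set X) :
  accessible_space X -> L_selective X -> countable A -> frechet (set_type A).
Proof.
move=> T1 sX cA S y clS.
pose B := set_val @` S.
have cB : countable B.
  apply: sub_countable cA; apply: subset_card_le => _ [s _ <-]; exact: set_valP.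
have clB : closure B (set_val y).
  move=> W /(@initial_continuous _ _ _ y) /clS[s [Ss Ws]].
  by exists (set_val s); split => //; exists s.
have [u [Bu uy]] := L_selective_countable_closure_cvg T1 sX cB clB.
have /choice[v vS] n : exists s, S s /\ set_val s = u n.
  by have [s Ss su] := Bu n; exists s.
exists v; split => [n|]; first exact: (vS n).1.
have vu : set_val \o v = u by apply/funext => n; exact: (vS n).2.
by apply: (@subspace_cvg _ _ (v @ \oo)); rewrite -vu in uy.
Qed.

End selections.

Theorem mainTheorem14 :
  (* (a) *)
  (forall X : topologicalType, accessible_space X ->
     countably_tight X -> L_selective X -> frechet X) /\
  (* (b) *)
  (forall X : topologicalType, accessible_space X -> L_selective X ->
     forall A : set X, countable A -> frechet (set_type A)) /\
  (* (c) *)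
  (forall X : topologicalType, accessible_space X ->
     strongly_L_selective X -> frechet X).
Proof.
split; [|split].
- by move=> X; exact: countably_tight_L_selective_frechet.
- by move=> X T1 sX A; exact: L_selective_countable_subspace_frechet.
- by move=> X _; exact: strongly_L_selective_frechet.
Qed.
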